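(* Let $B(x,y)=\sum_{n,k\ge0}B_{n,k}x^ny^k$ be the generating function of the Borel triangle $B_{n,k}=\frac{1}{n+1}\binom{2n+2}{n-k}\binom{n+k}{k}$, and let $c(x)=\frac{1-\sqrt{1-4x}}{2x}=\sum_{n\ge0}\frac{1}{n+1}\binom{2n}{n}x^n$ be the Catalan generating function. Then $$B(x,y)=\frac{1}{1-2x}\,c\!\left(\frac{x(x+y)}{(1-2x)^2}\right).$$
   Context: All identities are identities of formal power series in $x$ with coefficients polynomials in $y$. *)

(* Formal power series in x with coefficients in Q[y],
   represented by their coefficient sequences nat -> {poly rat}. *)
From HB Require Import structures.
From mathcomp Require Import all_boot all_order all_algebra.
Set Implicit Arguments. Unset Strict Implicit. Unset Printing Implicit Defensive.
Import Order.TTheory GRing.Theory Num.Theory.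
Local Open Scope ring_scope.

Definition fps := nat -> {poly rat}.

Definition fps_one : fps := fun n => if n == 0%N then 1 else 0.
Definition fps_x : fps := fun n => if n == 1%N then 1 else 0.
Definition fps_y : fps := fun n => if n == 0%N then 'X else 0.
Definition fps_add (f g : fps) : fps := fun n => f n + g n.
Definition fps_scale (c : rat) (f : fps) : fps := fun n => c%:P * f n.
Definition fps_mul (f g : fps) : fps :=
  fun n => \sum_(i < n.+1) f i * g (n - i)%N.
Fixpoint fps_pow (f : fps) (m : nat) : fps :=
  if m is m'.+1 then fps_mul f (fps_pow f m') else fps_one.

(* Composition a(F) = \sum_m a_m F^m of a univariate series with
   coefficients a : nat -> rat with a series F having F 0 = 0;
   since F has no constant term, F^m contributes only to degrees >= m,
   so the n-th coefficient is the finite sum over m <= n. *)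
Definition fps_comp (a : nat -> rat) (F : fps) : fps :=
  fun n => \sum_(m < n.+1) (a m)%:P * fps_pow F m n.

(* 1/(1-u) = \sum_m u^m for u without constant term *)
Definition fps_geom (u : fps) : fps := fps_comp (fun _ => 1) u.

Definition catalan (n : nat) : rat := (n.+1%:R)^-1 * ('C(n.*2, n))%:R.

(* Borel triangle B_{n,k} = 1/(n+1) binom(2n+2, n-k) binom(n+k, k),
   which is 0 when k > n (binomial with negative lower index). *)
Definition borel (n k : nat) : rat :=
  if (k <= n)%N then (n.+1%:R)^-1 * ('C(n.*2.+2, n - k))%:R * ('C(n + k, k))%:R
  else 0.

Definition borel_gf : fps := fun n => \sum_(k < n.+1) (borel n k)%:P * 'X^k.

From HB Require Import structures.
From mathcomp Require Import all_boot all_order all_algebra.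
From mathcomp Require Import zify ring.
Set Implicit Arguments. Unset Strict Implicit. Unset Printing Implicit Defensive.
Import Order.TTheory GRing.Theory Num.Theory.
Local Open Scope ring_scope.

(* Only the first n+1 Catalan terms reach degree n, since x(x+y)/(1-2x)^2 has
   no constant term; truncating at degree n, 1/(1-2x) becomes a finite
   geometric sum and everything is a polynomial computation.  Extracting the
   coefficient of x^n y^k from the composite gives
     sum_m C_m binom(m,k) 2^(n+k-2m) binom(n+k,2m).
   Each summand equals binom(n+1,m+1) binom(n-m,m-k) binom(n+k,k) 2^(n+k-2m)
   / (n+1), and the expansion (1+x)^(2n+2) = (1 + x(x+2))^(n+1) shows that
   sum_m binom(n+1,m+1) binom(n-m,m-k) 2^(n+k-2m) = binom(2n+2,n-k), which
   is B_{n,k} (n+1) / binom(n+k,k). *)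

Lemma coef_XaddC_exp (R : comNzRingType) (c : R) a t :
  (('X + c%:P) ^+ a)`_t = c ^+ (a - t) *+ 'C(a, t).
Proof.
rewrite addrC exprDn coef_sum.
under eq_bigr => i _ do
  rewrite coefMn -polyC_exp coefCM coefXn eq_sym -mulrnAl mulr_natr mulrb.
rewrite -big_mkcond (big_ord1_eq _ (fun i => c ^+ (a - i) *+ 'C(a, i))) ltnS.
case: leqP => // lt_at.
by rewrite bin_small.
Qed.

Lemma sum_bin_hockey j r : (\sum_(i < r.+1) 'C(j + i, j) = 'C(j.+1 + r, j.+1))%N.
Proof.
elim: r => [|r IHr]; first by rewrite big_ord1 !addn0 !binn.
by rewrite big_ord_recr /= IHr addnS binS addSn addnS.
Qed.

Section TruncatedGeometric.
Variables (R : comNzRingType) (c : R) (N : nat).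

Definition geom_trunc : {poly R} := \sum_(i < N.+1) (c%:P * 'X) ^+ i.

Lemma coef_geom_trunc r : (r <= N)%N -> geom_trunc`_r = c ^+ r.
Proof.
move=> le_rN; rewrite coef_sum.
under eq_bigr => i _ do rewrite exprMn -polyC_exp coefCM coefXn eq_sym mulr_natr mulrb.
by rewrite -big_mkcond (big_ord1_eq _ (fun i => c ^+ i)) ltnS le_rN.
Qed.

Lemma coef_geom_trunc_exp j r : (r <= N)%N ->
  (geom_trunc ^+ j.+1)`_r = c ^+ r *+ 'C(j + r, j).
Proof.
elim: j r => [|j IHj] r le_rN; first by rewrite expr1 coef_geom_trunc // bin0.
rewrite exprS coefM (reindex_inj rev_ord_inj) /=.
under eq_bigr => i _.
  have le_ir : (i <= r)%N by rewrite -ltnS.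
  rewrite subSS subKn // coef_geom_trunc ?IHj ?(leq_trans (leq_subr _ _)) ?(leq_trans le_ir) //.
  by rewrite mulrnAr -exprD subnK // over.
by rewrite sumrMnr sum_bin_hockey addSn.
Qed.

End TruncatedGeometric.

Lemma map_geom_trunc (R S : comNzRingType) (f : {rmorphism R -> S}) c N :
  map_poly f (geom_trunc c N) = geom_trunc (f c) N.
Proof.
rewrite rmorph_sum; apply: eq_bigr => i _.
by rewrite rmorphXn rmorphM /= map_polyC map_polyX.
Qed.

Lemma coef_XaddY_exp_mul (R : comNzRingType) m i k (h : {poly R}) :
  ((('X + 'X%:P) ^+ m * h^:P)`_i)`_k = ('X^(m - k) * h)`_i *+ 'C(m, k).
Proof.
rewrite exprDn mulr_suml !coef_sum.
under eq_bigr => j _.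
  rewrite mulrnAl !coefMn -polyC_exp mulrAC coefMC -(map_polyXn polyC) -rmorphM coef_map /=.
  by rewrite coefCM coefXn eq_sym -mulrnAl mulr_natr mulrb over.
rewrite -big_mkcond (big_ord1_eq _ (fun j => ('X^(m - j) * h)`_i *+ 'C(m, j))) ltnS.
by case: leqP => // lt_mk; rewrite bin_small.
Qed.

Lemma fact_natr_neq0 n : n`!%:R != 0 :> rat.
Proof. by rewrite pnatr_eq0 -lt0n fact_gt0. Qed.

Lemma bin_natrE N a b : N = (a + b)%N ->
  'C(N, a)%:R = N`!%:R / (a`!%:R * b`!%:R) :> rat.
Proof.
move=> ->; rewrite -(bin_fact (leq_addr b a)) addKn !natrM mulfK //.
by rewrite mulf_neq0 ?fact_natr_neq0.
Qed.

Lemma bin_double_expand n k : (k <= n)%N ->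
  'C(n.+1.*2, n - k)%:R = \sum_(m < n.+1 | (k <= m)%N)
    'C(n.+1, m.+1)%:R * 'C(n - m, m - k)%:R * 2 ^+ (n + k - m.*2) :> rat.
Proof.
move=> le_kn.
have binE N t : 'C(N, t)%:R = (('X + 1%:P) ^+ N)`_t :> rat.
  by rewrite coef_XaddC_exp expr1n.
have sqrX1 : ('X + 1%:P) ^+ 2 = 'X * ('X + 2%:P) + 1 :> {poly rat}.
  by rewrite polyC1 polyC_natr; ring.
rewrite binE -mul2n exprM sqrX1 exprDn big_ord_recl /= coefD coefMn expr1n.
rewrite mulr1 exprMn coefXnM subn0 ltnS leq_subr mul0rn add0r coef_sum [RHS]big_mkcond.
apply: eq_bigr => m _ /=; have lt_mn := ltn_ord m.
rewrite /bump add1n expr1n mulr1 subSS coefMn exprMn coefXnM.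
case: (leqP k m) => [le_km|lt_mk]; last by rewrite ifT ?mul0rn //; lia.
rewrite ifF; last by lia.
rewrite coef_XaddC_exp.
have -> : (n - k - (n - m) = m - k)%N by lia.
have -> : (n - m - (m - k) = n + k - m.*2)%N by lia.
by ring.
Qed.

Lemma borel_term_factor n m k : (k <= m)%N ->
  'C(n.+1, m.+1)%:R * 'C(n - m, m - k)%:R * 'C(n + k, k)%:R / n.+1%:R
    = catalan m * 'C(m, k)%:R * 'C(n + k, m.*2)%:R :> rat.
Proof.
move=> le_km; rewrite /catalan.
have [lt_nk_2m|le_2m_nk] := ltnP (n + k) m.*2.
  rewrite (bin_small lt_nk_2m) mulr0.
  have [lt_nm|le_mn] := ltnP n m; first by rewrite bin_small ?mul0r.
  by rewrite (@bin_small (n - m)) ?mulr0 ?mul0r //; lia.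
have [i def_m] : exists i, m = (k + i)%N by exists (m - k)%N; lia.
have [e def_n] : exists e, n = (k + i + i + e)%N by exists (n + k - m.*2)%N; lia.
subst m n.
have -> : (k + i + i + e - (k + i) = i + e)%N by lia.
have -> : (k + i - k = i)%N by lia.
rewrite (@bin_natrE _ (k + i).+1 (i + e)); last by lia.
rewrite (@bin_natrE (k + i + i + e + k) k (k + i + i + e)); last by lia.
rewrite (@bin_natrE (k + i + i + e + k) (k + i).*2 e); last by rewrite -addnn; lia.
rewrite (@bin_natrE _ (k + i) (k + i)) ?addnn // (@bin_natrE (i + e) i e) //.
rewrite (@bin_natrE (k + i) k i) // !factS; field.
by rewrite !fact_natr_neq0 -!natrD !nat1r !pnatr_eq0.
Qed.

Lemma borel_catalan_sum n k : borel n k = \sum_(m < n.+1)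
  catalan m * 'C(m, k)%:R * 2 ^+ (n + k - m.*2) * 'C(n + k, m.*2)%:R.
Proof.
rewrite /borel; case: leqP => [le_kn|lt_nk]; last first.
  by apply/esym/big1 => m _; rewrite bin_small ?mulr0 ?mul0r //; apply: leq_trans lt_nk.
rewrite -doubleS bin_double_expand // mulr_sumr mulr_suml [LHS]big_mkcond.
apply: eq_bigr => m _; case: leqP => [le_km|lt_mk]; last by rewrite bin_small ?mulr0 ?mul0r.
by rewrite [RHS]mulrAC -borel_term_factor //; ring.
Qed.

Lemma borel_gf_coef n k : (borel_gf n)`_k = borel n k.
Proof.
rewrite coef_sum.
under eq_bigr => i _ do rewrite coefCM coefXn eq_sym mulr_natr mulrb.
rewrite -big_mkcond (big_ord1_eq _ (borel n)) ltnS /borel.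
by case: leqP.
Qed.

(* [f] and [p] agree modulo x^(N+1); the series operations preserve this, so
   coefficients up to degree [N] can be computed with genuine polynomials. *)
Definition agree N (f : fps) (p : {poly {poly rat}}) :=
  forall i, (i <= N)%N -> f i = p`_i.

Section Agree.
Variable N : nat.

Lemma agree_one : agree N fps_one 1.
Proof. by move=> i _; rewrite /fps_one coef1; case: (i == 0%N). Qed.

Lemma agree_x : agree N fps_x 'X.
Proof. by move=> i _; rewrite /fps_x coefX; case: (i == 1%N). Qed.

Lemma agree_y : agree N fps_y 'X%:P.
Proof. by move=> i _; rewrite /fps_y coefC. Qed.

Lemma agree_add f g p q : agree N f p -> agree N g q -> agree N (fps_add f g) (p + q).
Proof. by move=> fp gq i le_iN; rewrite /fps_add coefD fp // gq. Qed.

Lemma agree_scale c f p : agree N f p -> agree N (fps_scale c f) ((c%:P)%:P * p).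
Proof. by move=> fp i le_iN; rewrite /fps_scale coefCM fp. Qed.

Lemma agree_mul f g p q : agree N f p -> agree N g q -> agree N (fps_mul f g) (p * q).
Proof.
move=> fp gq i le_iN; rewrite /fps_mul coefM; apply: eq_bigr => j _.
have le_ji : (j <= i)%N by rewrite -ltnS.
by rewrite fp ?gq ?(leq_trans (leq_subr _ _)) ?(leq_trans le_ji).
Qed.

Lemma agree_pow f p m : agree N f p -> agree N (fps_pow f m) (p ^+ m).
Proof.
move=> fp; elim: m => [|m IHm] /=; first exact: agree_one.
by rewrite exprS; apply: agree_mul.
Qed.

Lemma fps_pow_coef_small F m i : F 0%N = 0 -> (i < m)%N -> fps_pow F m i = 0.
Proof.
move=> F0; elim: m i => [//|m IHm] i lt_im /=.
rewrite /fps_mul big1 // => -[[|j] lt_ji] _ /=; first by rewrite F0 mul0r.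
by rewrite IHm ?mulr0 //; lia.
Qed.

(* Only the powers [F ^ m] with [m <= N] reach degree [N]. *)
Lemma agree_comp a F P : F 0%N = 0 -> agree N F P ->
  agree N (fps_comp a F) (\sum_(m < N.+1) ((a m)%:P)%:P * P ^+ m).
Proof.
move=> F0 FP i le_iN; rewrite /fps_comp coef_sum.
rewrite -(big_mkord xpredT (fun m => (((a m)%:P)%:P * P ^+ m)`_i)).
rewrite -(big_mkord xpredT (fun m => (a m)%:P * fps_pow F m i)).
rewrite [RHS](big_cat_nat _ (n := i.+1)) //= [X in _ = _ + X]big1_seq ?addr0.
  by apply: eq_big_nat => m _; rewrite coefCM -(agree_pow m FP).
move=> m; rewrite mem_index_iota => /and3P[_ lt_im _].
by rewrite coefCM -(agree_pow m FP) // fps_pow_coef_small ?mulr0.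
Qed.

Lemma agree_geom_scale_x c :
  agree N (fps_geom (fps_scale c fps_x)) (geom_trunc c N)^:P.
Proof.
have u0 : fps_scale c fps_x 0%N = 0 by rewrite /fps_scale /fps_x mulr0.
move=> i le_iN; rewrite map_geom_trunc /fps_geom (agree_comp _ u0 (agree_scale c agree_x)) //.
by under eq_bigr => m _ do rewrite !polyC1 mul1r.
Qed.

End Agree.

Section CompositeTerm.
Variable n : nat.
Let g := geom_trunc (2 : rat) n.

Lemma coef_borel_comp_term m k (a : rat) : (m <= n)%N ->
  ((g^:P * (((a%:P)%:P * ('X * ('X + 'X%:P) * (g^:P * g^:P)) ^+ m)))`_n)`_k
    = a * 'C(m, k)%:R * 2 ^+ (n + k - m.*2) * 'C(n + k, m.*2)%:R.
Proof.
move=> le_mn.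
have -> : g^:P * ((a%:P)%:P * ('X * ('X + 'X%:P) * (g^:P * g^:P)) ^+ m)
    = (a%:P)%:P * ('X^m * (('X + 'X%:P) ^+ m * (g ^+ (m.*2).+1)^:P)).
  by rewrite rmorphXn exprS -addnn exprD !exprMn; ring.
rewrite !coefCM coefXnM ltnNge le_mn /= coef_XaddY_exp_mul -!mulrA; congr (_ * _).
have [le_km|lt_mk] := leqP k m; last by rewrite bin_small ?mulr0n ?mul0r.
rewrite -[LHS]mulr_natl coefXnM; congr (_ * _).
have [lt_nk_2m|le_2m_nk] := ltnP (n + k) m.*2.
  by rewrite bin_small // mulr0 ifT //; rewrite -addnn in lt_nk_2m; lia.
rewrite ifF; last by rewrite -addnn in le_2m_nk; lia.
have -> : (n - m - (m - k) = n + k - m.*2)%N by rewrite -addnn in le_2m_nk *; lia.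
rewrite coef_geom_trunc_exp ?subnKC // ?mulr_natr //.
by rewrite -addnn in le_2m_nk *; lia.
Qed.

End CompositeTerm.

Theorem mainTheorem3 : forall n : nat,
  borel_gf n =
  fps_mul (fps_geom (fps_scale 2 fps_x))
    (fps_comp catalan
       (fps_mul (fps_mul fps_x (fps_add fps_x fps_y))
                (fps_mul (fps_geom (fps_scale 2 fps_x))
                         (fps_geom (fps_scale 2 fps_x))))) n.
Proof.
move=> n.
have geomE := @agree_geom_scale_x n 2.
have innerE := agree_mul (agree_mul (@agree_x n) (agree_add (@agree_x n) (@agree_y n)))
  (agree_mul geomE geomE).
have inner0 : fps_mul (fps_mul fps_x (fps_add fps_x fps_y))
    (fps_mul (fps_geom (fps_scale 2 fps_x)) (fps_geom (fps_scale 2 fps_x))) 0%N = 0.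
  by rewrite /fps_mul !big_ord1 /fps_x /= !mul0r.
rewrite (agree_mul geomE (agree_comp catalan inner0 innerE)) //.
apply/polyP => k; rewrite borel_gf_coef borel_catalan_sum mulr_sumr !coef_sum.
by apply: eq_bigr => m _; rewrite coef_borel_comp_term // -ltnS.
Qed.
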